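(* If a topological space $X$ is crowded and openly irresolvable, then every instance of the McKinsey scheme $\mathrm{M}:\ \Box\Diamond\varphi\to\Diamond\Box\varphi$ is $d$-valid in $X$.
   Context: $d$-semantics: a model on a space $X$ is a valuation of propositional variables by subsets of $X$; truth sets interpret Boolean connectives as set operations, $\Diamond\varphi$ as the derived set (set of limit points: $x$ such that every $O-\{x\}$, $O$ an open neighbourhood of $x$, meets the set) of the truth set of $\varphi$, and $\Box=\neg\Diamond\neg$. A formula is $d$-valid in $X$ if true at every point in every model on $X$. $X$ is crowded if it has no isolated points. A space is resolvable if it has two disjoint non-empty dense subsets, irresolvable otherwise; $X$ is openly irresolvable if every non-empty open subspace is irresolvable. *)

From HB Require Import structures.
From mathcomp Require Import all_boot all_order.
From mathcomp Require Import boolp classical_sets topology.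
Set Implicit Arguments. Unset Strict Implicit. Unset Printing Implicit Defensive.
Local Open Scope classical_set_scope.

Inductive mform : Type :=
  | MVar : nat -> mform
  | MBot : mform
  | MNeg : mform -> mform
  | MAnd : mform -> mform -> mform
  | MDia : mform -> mform.

Definition MOr (p q : mform) := MNeg (MAnd (MNeg p) (MNeg q)).
Definition MImp (p q : mform) := MOr (MNeg p) q.
Definition MBox (p : mform) := MNeg (MDia (MNeg p)).

Definition derived (X : topologicalType) (A : set X) : set X := limit_point A.

Fixpoint truth (X : topologicalType) (v : nat -> set X) (f : mform) : set X :=
  match f with
  | MVar n => v n
  | MBot => set0
  | MNeg p => ~` truth v p
  | MAnd p q => truth v p `&` truth v q
  | MDia p => derived (truth v p)
  end.

Definition d_valid (X : topologicalType) (f : mform) : Prop :=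
  forall (v : nat -> set X) (x : X), truth v f x.

Definition crowded (X : topologicalType) : Prop :=
  forall x : X, ~ open [set x].

(* A is dense in the subspace Y (subspace topology: opens of Y are O `&` Y) *)
Definition dense_in (X : topologicalType) (Y A : set X) : Prop :=
  forall O : set X, open O -> O `&` Y !=set0 -> O `&` A !=set0.

Definition resolvable_sub (X : topologicalType) (Y : set X) : Prop :=
  exists A B : set X, A `<=` Y /\ B `<=` Y /\ A `&` B = set0 /\
    A !=set0 /\ B !=set0 /\ dense_in Y A /\ dense_in Y B.

Definition openly_irresolvable (X : topologicalType) : Prop :=
  forall U : set X, open U -> U !=set0 -> ~ resolvable_sub U.

(* Let A be the truth set of phi and x a point of [Box Dia phi]: on some neighbourhood U of x,
   every point other than x is a limit point of A.  Given a neighbourhood V of x, an open W0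
   with x in W0 `<=` U `&` V is irresolvable, so W0 `&` A and W0 `&` ~` A are not both dense
   in W0: some nonempty open W `<=` W0 misses A or misses ~` A.  As X is crowded, W contains
   a point y other than x.  W cannot miss A because y is a limit point of A; hence W `<=` A,
   y satisfies [Box phi], and x is a limit point of the truth set of [Box phi]. *)

From mathcomp Require Import all_boot boolp classical_sets topology.

Set Implicit Arguments.
Unset Strict Implicit.
Unset Printing Implicit Defensive.

Local Open Scope classical_set_scope.

Section DSemantics.
Variable X : topologicalType.

Lemma truth_MImp (v : nat -> set X) (p q : mform) (x : X) :
  (truth v p x -> truth v q x) -> truth v (MImp p q) x.
Proof. by move=> pq /= [/contrapT/pq qx]; apply. Qed.

Lemma dense_in_neq0 (Y S : set X) : Y !=set0 -> dense_in Y S -> S !=set0.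
Proof.
move=> [y Yy] /(_ setT openT); rewrite !setTI; apply.
by exists y.
Qed.

Lemma not_dense_in_open (Y S : set X) : open Y -> ~ dense_in Y S ->
  exists W, [/\ open W, W !=set0, W `<=` Y & W `&` S = set0].
Proof.
move=> oY /existsNP [O /not_implyP [oO /not_implyP [OYne /set0P/negP/negPn/eqP OS0]]].
exists (O `&` Y); split; [exact: openI | by [] | exact: subIsetr |].
by rewrite setIAC OS0 set0I.
Qed.

Lemma openly_irresolvable_not_dense (Y A : set X) :
  openly_irresolvable X -> open Y -> Y !=set0 ->
  ~ (dense_in Y (Y `&` A) /\ dense_in Y (Y `&` ~` A)).
Proof.
move=> oi oY Yne [DA DnA]; apply: (oi Y oY Yne).
exists (Y `&` A), (Y `&` ~` A); do 2?split; try exact: subIsetl.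
split; first by rewrite setIACA setIid setICr setI0.
by split; [exact: dense_in_neq0 DA | split; [exact: dense_in_neq0 DnA | ]].
Qed.

Lemma openly_irresolvable_monochromatic (Y A : set X) :
  openly_irresolvable X -> open Y -> Y !=set0 ->
  exists W, [/\ open W, W !=set0, W `<=` Y & W `&` A = set0 \/ W `&` ~` A = set0].
Proof.
move=> oi oY Yne.
have [DA|/(not_dense_in_open oY) [W [oW Wne WY WA]]] := pselect (dense_in Y (Y `&` A));
  last by exists W; split => //; left; rewrite setIA (setIidl WY) in WA.
have [DnA|/(not_dense_in_open oY) [W [oW Wne WY WnA]]] :=
  pselect (dense_in Y (Y `&` ~` A)).
  by case: (openly_irresolvable_not_dense (A := A) oi oY Yne).
by exists W; split => //; right; rewrite setIA (setIidl WY) in WnA.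
Qed.

Lemma crowded_open_neq (W : set X) (x : X) : crowded X -> open W -> W !=set0 ->
  exists2 y, W y & y != x.
Proof.
move=> cr oW [w Ww]; apply: contrapT => /forall2NP noy.
have Wx (z : X) : W z -> z = x.
  by move=> Wz; have [//|/negP/negPn/eqP] := noy z.
apply: (cr x); suff -> : [set x] = W by [].
by apply/seteqP; split => [z -> | z /Wx ->]; rewrite // -(Wx w Ww).
Qed.

Lemma open_disjoint_not_limit_point (W B : set X) (y : X) :
  open W -> W y -> W `&` B = set0 -> ~ limit_point B y.
Proof.
move=> oW Wy WB; rewrite not_limit_pointE.
by exists W; [exact: open_nbhs_nbhs | rewrite setIC WB].
Qed.

Lemma derived_mckinsey (A : set X) : crowded X -> openly_irresolvable X ->
  ~` derived (~` derived A) `<=` derived (~` derived (~` A)).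
Proof.
move=> cr oi x; rewrite /derived /setC /= not_limit_pointE => -[U Ux UdA] V Vx.
have dA (y : X) : U y -> y != x -> limit_point A y.
  by move=> Uy /eqP yx; apply: contrapT => ndAy; exact/yx/UdA.
have : nbhs x (U `&` V) by apply: filterI.
rewrite nbhsE => -[W0 [oW0 W0x] W0UV].
have [W [oW Wne WW0 WAnA]] :=
  openly_irresolvable_monochromatic A oi oW0 (ex_intro _ x W0x).
have [y Wy yx] := crowded_open_neq x cr oW Wne.
have [Uy Vy] := W0UV y (WW0 y Wy).
case: WAnA => [WA | WnA].
  by exfalso; exact: (open_disjoint_not_limit_point oW Wy WA (dA y Uy yx)).
by exists y; split => //; exact: (open_disjoint_not_limit_point oW Wy WnA).
Qed.

End DSemantics.

Theorem theorem9 (X : topologicalType) :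
  crowded X -> openly_irresolvable X ->
  forall phi : mform, d_valid X (MImp (MBox (MDia phi)) (MDia (MBox phi))).
Proof.
move=> cr oi phi v x; apply: truth_MImp.
exact: derived_mckinsey.
Qed.
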